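(* Let $\mathcal H_A,\mathcal H_B$ be finite-dimensional complex Hilbert spaces and let $\rho$ be a separable density matrix on $\mathcal H_A\otimes\mathcal H_B$. Let $\rho^{T_B}=(\mathbf 1_A\otimes T)\rho$, where $T$ is transposition in a chosen basis of $\mathcal H_B$. Then $\mathcal L_{\mathcal E}(\rho)=\mathcal L_{\mathcal E}(\rho^{T_B})$.
   Context: $\rho$ is separable if $\rho=\sum_i p_i\,|\psi_i\rangle\langle\psi_i|\otimes|\phi_i\rangle\langle\phi_i|$ with $p_i>0$ and unit vectors $\psi_i\in\mathcal H_A,\phi_i\in\mathcal H_B$ (a separable decomposition). For a separable $\rho$, the optimal ensemble cardinality $\mathcal L_{\mathcal E}(\rho)$ is the least number of distinct pure product states needed in a separable decomposition of $\rho$. *)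

From HB Require Import structures.
From mathcomp Require Import all_boot all_order all_algebra.
From mathcomp Require Import complex mxtens.
Set Implicit Arguments. Unset Strict Implicit. Unset Printing Implicit Defensive.
Import Order.TTheory GRing.Theory Num.Theory.
Local Open Scope ring_scope.

Definition adj {C : numClosedFieldType} {m n} (A : 'M[C]_(m, n)) : 'M[C]_(n, m) :=
  (map_mx Num.conj A)^T.

Definition unit_vec {C : numClosedFieldType} {m} (v : 'cV[C]_m) : Prop :=
  adj v *m v = 1.

Definition proj {C : numClosedFieldType} {m} (v : 'cV[C]_m) : 'M[C]_m :=
  v *m adj v.

(* separable decomposition of rho on C^m (x) C^n with k distinct pure product states;
   the tensor product is the Kronecker product tensmx (index (i,j) |-> i*n+j). *)
Definition sep_decomp {C : numClosedFieldType} {m n}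
    (rho : 'M[C]_(m * n)) (k : nat) : Prop :=
  exists (p : 'I_k -> C) (psi : 'I_k -> 'cV[C]_m) (phi : 'I_k -> 'cV[C]_n),
    [/\ forall i, 0 < p i,
        forall i, unit_vec (psi i),
        forall i, unit_vec (phi i),
        injective (fun i => proj (psi i) *t proj (phi i)) &
        rho = \sum_(i < k) p i *: (proj (psi i) *t proj (phi i))].

Definition separable {C : numClosedFieldType} {m n} (rho : 'M[C]_(m * n)) : Prop :=
  exists k, sep_decomp rho k.

(* k is the optimal ensemble cardinality L_E(rho): the least k admitting
   a separable decomposition with k distinct pure product states. *)
Definition is_optimal_card {C : numClosedFieldType} {m n}
    (rho : 'M[C]_(m * n)) (k : nat) : Prop :=
  sep_decomp rho k /\ forall k', sep_decomp rho k' -> (k <= k')%N.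

Definition psd {C : numClosedFieldType} {N} (A : 'M[C]_N) : Prop :=
  adj A = A /\ forall v : 'cV[C]_N, 0 <= (adj v *m A *m v) 0 0.

Definition density {C : numClosedFieldType} {N} (A : 'M[C]_N) : Prop :=
  psd A /\ \tr A = 1.

Definition ptransB {C : numClosedFieldType} {m n} (rho : 'M[C]_(m * n)) : 'M[C]_(m * n) :=
  \matrix_(a, b)
    rho (mxtens_index ((mxtens_unindex a).1, (mxtens_unindex b).2))
        (mxtens_index ((mxtens_unindex b).1, (mxtens_unindex a).2)).

From mathcomp Require Import all_boot all_order all_algebra.
From mathcomp Require Import complex mxtens.
Set Implicit Arguments. Unset Strict Implicit. Unset Printing Implicit Defensive.
Import Order.TTheory GRing.Theory Num.Theory.
Local Open Scope ring_scope.

(* The partial transpose is linear and involutive, and it sends a pure product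
   state |psi><psi| (x) |phi><phi| to |psi><psi| (x) |conj phi><conj phi|, again a
   pure product state.  Hence it maps every separable decomposition of rho with k
   distinct pure product states to one of rho^T_B with k distinct pure product
   states, and back, so both matrices admit decompositions of exactly the same
   cardinalities. *)

Section PartialTranspose.
Variable C : numClosedFieldType.

Lemma ptransB_tensmx m n (A : 'M[C]_m) (B : 'M[C]_n) :
  ptransB (A *t B) = A *t B^T.
Proof. by apply/matrixP=> a b; rewrite !mxE !mxtens_indexK. Qed.

Lemma ptransBK m n : involutive (@ptransB C m n).
Proof.
move=> M; apply/matrixP=> a b; rewrite !mxE !mxtens_indexK /=.
by rewrite -[in RHS](mxtens_unindexK a) -[in RHS](mxtens_unindexK b).
Qed.

Lemma ptransB_sumZ m n k (p : 'I_k -> C) (F : 'I_k -> 'M[C]_(m * n)) :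
  ptransB (\sum_(i < k) p i *: F i) = \sum_(i < k) p i *: ptransB (F i).
Proof.
by apply/matrixP=> a b; rewrite !mxE !summxE; apply: eq_bigr => i _; rewrite !mxE.
Qed.

Lemma tr_proj m (v : 'cV[C]_m) : (proj v)^T = proj (map_mx Num.conj v).
Proof. by apply/matrixP=> a b; rewrite !mxE !big_ord1 !mxE conjCK mulrC. Qed.

Lemma unit_vec_conj m (v : 'cV[C]_m) :
  unit_vec v -> unit_vec (map_mx Num.conj v).
Proof.
rewrite /unit_vec => /matrixP/(_ 0 0); rewrite !mxE => v_norm1.
apply/matrixP=> a b; rewrite !ord1 !mxE -v_norm1.
by apply: eq_bigr => i _; rewrite !mxE conjCK mulrC.
Qed.

Lemma sep_decomp_ptransB m n (rho : 'M[C]_(m * n)) k :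
  sep_decomp rho k -> sep_decomp (ptransB rho) k.
Proof.
move=> [p [psi [phi [p_gt0 psi_unit phi_unit prod_inj ->]]]].
have ptransB_term i :
    ptransB (proj (psi i) *t proj (phi i))
    = proj (psi i) *t proj (map_mx Num.conj (phi i)).
  by rewrite ptransB_tensmx tr_proj.
exists p, psi, (fun i => map_mx Num.conj (phi i)); split=> //.
- by move=> i; apply: unit_vec_conj.
- move=> i j /= eq_ij; apply: prod_inj; apply: (can_inj (@ptransBK m n)).
  by rewrite !ptransB_term.
- by rewrite ptransB_sumZ; apply: eq_bigr => i _; rewrite ptransB_term.
Qed.

Lemma sep_decomp_ptransBE m n (rho : 'M[C]_(m * n)) k :
  sep_decomp (ptransB rho) k <-> sep_decomp rho k.
Proof.
split; last exact: sep_decomp_ptransB.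
by move=> /sep_decomp_ptransB; rewrite ptransBK.
Qed.

Lemma is_optimal_card_ptransB m n (rho : 'M[C]_(m * n)) k :
  is_optimal_card (ptransB rho) k <-> is_optimal_card rho k.
Proof.
rewrite /is_optimal_card sep_decomp_ptransBE.
by split=> -[dec min]; split=> // k' /sep_decomp_ptransBE; apply: min.
Qed.

End PartialTranspose.

Theorem lemma1 (R : rcfType) (m n : nat) (rho : 'M[R[i]]_(m * n)) :
  density rho -> separable rho ->
  forall k : nat, is_optimal_card rho k <-> is_optimal_card (ptransB rho) k.
Proof.
by move=> _ _ k; rewrite is_optimal_card_ptransB.
Qed.
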